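(* If a simplicial complex $\mathcal{C}$ is nuclear, then its Alexander dual $\mathcal{C}^*$ is nuclear.
   Context: A simplicial complex on a finite ground set $V$ is a family of subsets of $V$ closed under subsets (the void complex $\{\}$ and $\{\emptyset\}$ allowed); facets are inclusion-maximal faces; complexes are considered up to isomorphism (bijection of ground sets carrying faces to faces). Alexander dual: $\mathcal{C}^*=\{S\subseteq V: V\setminus S\notin\mathcal{C}\}$ on $V$. $\Delta_k$ ($k\ge0$): complex on a $(k+1)$-set with that set as only facet; $\Delta_{-1}=\{\emptyset\}$, $\Delta_{-2}=\{\}$ on the empty set. $\sqcup$: disjoint union. $D_{m,n}=(\Delta_m\sqcup\Delta_n)^*$. $\operatorname{cone}^p(\mathcal{D})$: add $p$ new vertices $u_1,\dots,u_p$, facets $F\cup\{u_1,\dots,u_p\}$ ($\operatorname{cone}^0(\mathcal{D})=\mathcal{D}$). $G(\mathcal{D})$: $\mathcal{D}$ with one new ground-set element lying in no face. For $\mathcal{D}$ on $[n]$, $\Lambda(\mathcal{D})$ is the complex on $[n+1]$ with facets $[n]$ and $F\cup\{n+1\}$, $F$ a facet of $\mathcal{D}$. A complex is nuclear if it is (isomorphic to) one of: $\Lambda(\mathcal{D})$ with $\mathcal{D}$ nuclear; $G(\mathcal{D})$ with $\mathcal{D}$ nuclear; $\operatorname{cone}^p(\Delta_m\sqcup\Delta_n)$, $p,m,n\ge0$; $\operatorname{cone}^p(D_{m,n})$, $p\ge0$, $m,n\ge1$; $\Delta_k$, $k\ge-2$. *)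

From mathcomp Require Import all_boot fingroup perm.
Set Implicit Arguments. Unset Strict Implicit. Unset Printing Implicit Defensive.

(* A simplicial complex on 'I_n: a family of subsets closed under subsets
   (void complex set0 and [set set0] allowed). *)
Definition is_complex n (C : {set {set 'I_n}}) : Prop :=
  forall S T : {set 'I_n}, T \subset S -> S \in C -> T \in C.

(* Isomorphism: a bijection of ground sets carrying faces exactly to faces.
   (Bijections between finite ground sets force equal sizes, so a permutation.) *)
Definition iso n (C D : {set {set 'I_n}}) : Prop :=
  exists s : {perm 'I_n}, forall S : {set 'I_n}, (S \in C) = (s @: S \in D).

Definition dual n (C : {set {set 'I_n}}) : {set {set 'I_n}} :=
  [set S | ~: S \notin C].

(* The simplex on all of 'I_n: Delta_{n-1}; n = 0 gives Delta_{-1} = {emptyset}. *)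
Definition simplex n : {set {set 'I_n}} := [set: {set 'I_n}].

Definition restr n (S : {set 'I_n.+1}) : {set 'I_n} :=
  [set i : 'I_n | widen_ord (leqnSn n) i \in S].

(* G(D): new vertex n (= ord_max) lying in no face. *)
Definition Gc n (D : {set {set 'I_n}}) : {set {set 'I_n.+1}} :=
  [set S : {set 'I_n.+1} | (ord_max \notin S) && (restr S \in D)].

(* Lambda(D): facets [n] and F + {n}, F a facet of D. *)
Definition Lambda n (D : {set {set 'I_n}}) : {set {set 'I_n.+1}} :=
  [set S : {set 'I_n.+1} | (ord_max \notin S) || (restr S \in D)].

(* cone^p(D): new vertices are the first p elements of 'I_(p + k). *)
Definition cone p k (D : {set {set 'I_k}}) : {set {set 'I_(p + k)}} :=
  [set S : {set 'I_(p + k)} | [set i : 'I_k | rshift p i \in S] \in D].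

(* Disjoint union: C1 on the first a vertices, C2 on the last b vertices. *)
Definition dunion a b (C1 : {set {set 'I_a}}) (C2 : {set {set 'I_b}})
  : {set {set 'I_(a + b)}} :=
  [set S : {set 'I_(a + b)} | ((S \subset [set lshift b i | i : 'I_a]) &&
             ([set i : 'I_a | lshift b i \in S] \in C1))
        || ((S \subset [set rshift a i | i : 'I_b]) &&
             ([set i : 'I_b | rshift a i \in S] \in C2))].

(* D_{m,n} = (Delta_m disjoint-union Delta_n)^* *)
Definition Dmn m n : {set {set 'I_(m.+1 + n.+1)}} :=
  dual (dunion (simplex m.+1) (simplex n.+1)).

Inductive nuclear : forall n, {set {set 'I_n}} -> Prop :=
| nuc_iso n (C D : {set {set 'I_n}}) : nuclear C -> iso C D -> nuclear D
| nuc_Lambda n (D : {set {set 'I_n}}) : nuclear D -> nuclear (Lambda D)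
| nuc_G n (D : {set {set 'I_n}}) : nuclear D -> nuclear (Gc D)
| nuc_cone_dunion p m n : nuclear (cone p (dunion (simplex m.+1) (simplex n.+1)))
| nuc_cone_D p m n : 1 <= m -> 1 <= n -> nuclear (cone p (Dmn m n))
| nuc_simplex n : nuclear (simplex n)
| nuc_void : nuclear (set0 : {set {set 'I_0}}).

(* Alexander duality is an involution that commutes with isomorphism and with
   cones, and exchanges [Lambda] with [G]; it exchanges [Delta_k] with the void
   complex, and [cone^p (Delta_m + Delta_n)] with [cone^p D_{m,n}].  So the dual
   of every basic nuclear complex is again basic, except that [D_{0,n}] is not a
   constructor.  A face of [D_{0,n}] is a set that avoids the vertex of [Delta_0]
   and does not contain the vertex set [B] of [Delta_n]; moving that vertex to
   the top exhibits it as [G] of the complex of sets not containing [B], and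
   moving a vertex of [B] to the top exhibits the latter as [Lambda] of the same
   kind of complex on one vertex less. *)
From mathcomp Require Import all_boot fingroup perm.
Set Implicit Arguments. Unset Strict Implicit. Unset Printing Implicit Defensive.
Local Open Scope group_scope.

Lemma imset_permC (T : finType) (s : {perm T}) (A : {set T}) :
  s @: (~: A) = ~: (s @: A).
Proof. by rewrite -[s]invgK !im_permV preimsetC. Qed.

Lemma nuclear_perm n (s : {perm 'I_n}) (C D : {set {set 'I_n}}) :
  (forall S, (S \in C) = (s @^-1: S \in D)) -> nuclear C -> nuclear D.
Proof. by move=> CD /nuc_iso; apply; exists s^-1 => S; rewrite im_permV. Qed.

Lemma nuclear_set0 n : nuclear (set0 : {set {set 'I_n}}).
Proof.
elim: n => [|n IH]; first exact: nuc_void.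
suff -> : set0 = Gc (set0 : {set {set 'I_n}}) by apply: nuc_G.
by apply/setP => S; rewrite !inE andbF.
Qed.

Section Duality.

Variable n : nat.
Implicit Types C D : {set {set 'I_n}}.

Lemma dualK : involutive (@dual n).
Proof. by move=> C; apply/setP => S; rewrite !inE setCK negbK. Qed.

Lemma iso_dual C D : iso C D -> iso (dual C) (dual D).
Proof. by case=> s CD; exists s => S; rewrite !inE CD imset_permC. Qed.

Lemma restrC (S : {set 'I_n.+1}) : restr (~: S) = ~: restr S.
Proof. by apply/setP => i; rewrite !inE. Qed.

Lemma dual_Lambda D : dual (Lambda D) = Gc (dual D).
Proof. by apply/setP => S; rewrite !inE restrC negb_or negbK. Qed.

Lemma dual_Gc D : dual (Gc D) = Lambda (dual D).
Proof. by apply/setP => S; rewrite !inE restrC negb_and negbK. Qed.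

Lemma dual_cone p D : dual (cone p D) = cone p (dual D).
Proof.
by apply/setP => S; rewrite !inE; congr (~~ (_ \in D)); apply/setP => i; rewrite !inE.
Qed.

Lemma dual_simplex : dual (simplex n) = set0.
Proof. by apply/setP => S; rewrite !inE. Qed.

End Duality.

Lemma dual_void : dual (set0 : {set {set 'I_0}}) = simplex 0.
Proof. by apply/setP => S; rewrite !inE. Qed.

Definition nsupset n (B : {set 'I_n}) : {set {set 'I_n}} :=
  [set S : {set 'I_n} | ~~ (B \subset S)].

Section TopVertex.

Variable n : nat.
Implicit Types B S : {set 'I_n.+1}.

Lemma mem_restr S i : (i \in restr S) = (lift ord_max i \in S).
Proof. by rewrite inE; congr (_ \in S); apply: ord_inj; rewrite lift_max. Qed.

Lemma subset_restr B S :
  (B \subset S) = ((ord_max \in B) ==> (ord_max \in S)) && (restr B \subset restr S).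
Proof.
apply/subsetP/andP => [BS | [/implyP BSmax /subsetP BS] x].
  split; first exact/implyP/BS.
  by apply/subsetP => i; rewrite !mem_restr; apply: BS.
by case: (unliftP ord_max x) => [i ->|->] //; rewrite -!mem_restr; apply: BS.
Qed.

Lemma nsupset_Lambda B : ord_max \in B -> nsupset B = Lambda (nsupset (restr B)).
Proof. by move=> Bmax; apply/setP => S; rewrite !inE subset_restr Bmax negb_and. Qed.

Lemma nsupset_Gc B : ord_max \notin B ->
  [set S : {set 'I_n.+1} | (ord_max \notin S) && ~~ (B \subset S)] =
  Gc (nsupset (restr B)).
Proof. by move=> /negbTE Bmax; apply/setP => S; rewrite !inE subset_restr Bmax. Qed.

End TopVertex.

Lemma nsupset0 n : nsupset (set0 : {set 'I_n}) = set0.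
Proof. by apply/setP => S; rewrite !inE sub0set. Qed.

Lemma nuclear_nsupset n (B : {set 'I_n}) : nuclear (nsupset B).
Proof.
elim: n B => [|n IH] B; have [->|/set0Pn[b Bb]] := eqVneq B set0;
  rewrite ?nsupset0; try exact: nuclear_set0; first by case: b Bb.
pose s := tperm b ord_max.
apply: (@nuclear_perm _ s (nsupset (s @: B))).
  by move=> S; rewrite !inE sub_imset_pre.
rewrite nsupset_Lambda; first exact: nuc_Lambda (IH _).
by apply/imsetP; exists b; rewrite ?tpermL.
Qed.

Lemma nuclear_nsupset_notin n (a : 'I_n) (B : {set 'I_n}) : a \notin B ->
  nuclear [set S : {set 'I_n} | (a \notin S) && ~~ (B \subset S)].
Proof.
case: n a B => [[]//|n] a B aB; pose s := tperm a ord_max.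
apply: (@nuclear_perm _ s
  [set S : {set 'I_n.+1} | (ord_max \notin S) && ~~ (s @: B \subset S)]).
  by move=> S; rewrite !inE sub_imset_pre /s tpermL.
rewrite (@nsupset_Gc n (s @: B)); first exact: nuc_G (nuclear_nsupset _).
by rewrite -{1}(tpermL a ord_max) mem_imset //; apply: perm_inj.
Qed.

Lemma lshift_imsetC m n :
  [set lshift n i | i : 'I_m] = ~: [set rshift m j | j : 'I_n].
Proof.
apply/setP => x; rewrite inE; case: (split_ordP x) => [i|j] ->.
  rewrite mem_imset; last exact: lshift_inj.
  by apply/esym/imsetP => -[j _ /eqP]; rewrite eq_lrshift.
rewrite mem_imset ?negbK; last exact: rshift_inj.
by apply/imsetP => -[i _ /eqP]; rewrite eq_rlshift.
Qed.

Lemma setC_sub_lshift m n (T : {set 'I_(m + n)}) :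
  (~: T \subset [set lshift n i | i : 'I_m]) = ([set rshift m j | j : 'I_n] \subset T).
Proof. by rewrite lshift_imsetC setCS. Qed.

Lemma setC_sub_rshift m n (T : {set 'I_(m + n)}) :
  (~: T \subset [set rshift m j | j : 'I_n]) = ([set lshift n i | i : 'I_m] \subset T).
Proof. by rewrite -setCS setCK lshift_imsetC. Qed.

Lemma mem_cone_Dmn p m n (S : {set 'I_(p + (m.+1 + n.+1))}) :
  (S \in cone p (Dmn m n)) =
  ~~ ([set rshift p (lshift n.+1 i) | i : 'I_m.+1] \subset S) &&
  ~~ ([set rshift p (rshift m.+1 j) | j : 'I_n.+1] \subset S).
Proof.
rewrite !inE !andbT setC_sub_lshift setC_sub_rshift negb_or andbC.
by rewrite -!sub_imset_pre -!imset_comp.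
Qed.

Lemma imset_ord1 (T : finType) (f : 'I_1 -> T) : [set f i | i : 'I_1] = [set f ord0].
Proof.
by apply/setP => x; apply/imsetP/set1P => [[i _ ->]|->]; [rewrite ord1 | exists ord0].
Qed.

Lemma nuclear_cone_Dmn p m n : nuclear (cone p (Dmn m n)).
Proof.
case: m => [|m]; last case: n => [|n]; last by apply: nuc_cone_D.
- set a := rshift p (lshift n.+1 (@ord0 0)).
  set B := [set rshift p (rshift 1 j) | j : 'I_n.+1].
  have -> : cone p (Dmn 0 n) = [set S : {set _} | (a \notin S) && ~~ (B \subset S)].
    by apply/setP => S; rewrite mem_cone_Dmn imset_ord1 sub1set inE.
  apply: nuclear_nsupset_notin.
  by apply/imsetP => -[j _ /rshift_inj/eqP]; rewrite eq_lrshift.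
- set a := rshift p (rshift m.+2 (@ord0 0)).
  set B := [set rshift p (lshift 1 i) | i : 'I_m.+2].
  have -> : cone p (Dmn m.+1 0) = [set S : {set _} | (a \notin S) && ~~ (B \subset S)].
    by apply/setP => S; rewrite mem_cone_Dmn imset_ord1 sub1set inE andbC.
  apply: nuclear_nsupset_notin.
  by apply/imsetP => -[i _ /rshift_inj/eqP]; rewrite eq_rlshift.
Qed.

Theorem proposition6p2 (n : nat) (C : {set {set 'I_n}}) :
  is_complex C -> nuclear C -> nuclear (dual C).
Proof.
move=> _; elim=> {n C}.
- by move=> n C D _ nuc_dualC /iso_dual; apply: nuc_iso.
- by move=> n D _ nuc_dualD; rewrite dual_Lambda; apply: nuc_G.
- by move=> n D _ nuc_dualD; rewrite dual_Gc; apply: nuc_Lambda.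
- by move=> p m n; rewrite dual_cone; apply: nuclear_cone_Dmn.
- by move=> p m n _ _; rewrite dual_cone dualK; apply: nuc_cone_dunion.
- by move=> n; rewrite dual_simplex; apply: nuclear_set0.
- by rewrite dual_void; apply: nuc_simplex.
Qed.
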